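(* Let $\Gamma$ be a nontrivial group, $K=\bigoplus_{\mathbf{Q}_2}\Gamma$, $\overline K=\prod_{\mathbf{Q}_2}\Gamma$, $G=K\rtimes V$ (untwisted) inside $\overline G=\overline K\rtimes V$, and identify $Z\Gamma$ with the constant $Z\Gamma$-valued maps in $\overline K$. Then the formula $\sigma_0(\varphi,\beta)(\zeta,f)=(\beta(\zeta),\ \overline\beta(f)^\varphi\cdot\beta(\zeta)^{\mu_\varphi})$, for $(\varphi,\beta)\in\mathrm{Stab}_N(\mathbf{Q}_2)\times\mathrm{Aut}(\Gamma)$ and $(\zeta,f)\in Z\Gamma\times\overline K/Z\Gamma$, defines an action by automorphisms of $\mathrm{Stab}_N(\mathbf{Q}_2)\times\mathrm{Aut}(\Gamma)$ on $Z\Gamma\times\overline K/Z\Gamma$; it preserves $Z\Gamma\times N_{\overline K}(G)/Z\Gamma$, and the induced map $\sigma:\mathrm{Stab}_N(\mathbf{Q}_2)\times\mathrm{Aut}(\Gamma)\to\mathrm{Aut}(Z\Gamma\times N_{\overline K}(G)/Z\Gamma)$ is an injective group morphism.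
   Context: Cantor space $\mathfrak C=\{0,1\}^{\mathbf N}$; $C_m=\{m\cdot x\}$. Thompson's group $V$: homeomorphisms $v$ with $v(m_kx)=m'_kx$ for partitions $\mathfrak C=\bigsqcup C_{m_k}=\bigsqcup C_{m'_k}$; slope $v'(x)=2^{|m_k|-|m'_k|}$ on $C_{m_k}$. $\mathbf{Q}_2$: eventually-zero sequences, identified with dyadic rationals of $[0,1)$ via $x\mapsto\sum_{n\ge1}x_n2^{-n}$; $0$ is the zero sequence. $\nu$: dyadic valuation ($\nu(0)=0$, $\nu(2^kp/q)=k$ for $p,q$ odd). $\mathrm{Stab}_N(\mathbf{Q}_2)=\{\varphi\in\mathrm{Homeo}(\mathfrak C):\varphi V\varphi^{-1}=V,\varphi(\mathbf{Q}_2)=\mathbf{Q}_2\}$. $V$ acts on $\overline K$ by $f^v(x)=f(v^{-1}x)$; $N_{\overline K}(G)=\{f\in\overline K:fGf^{-1}=G\}$. $f^\varphi(x)=f(\varphi^{-1}x)$, $\overline\beta(f)(x)=\beta(f(x))$. $\mu_\varphi(x)=\log_2((\varphi^{-1}v\varphi)'(\varphi^{-1}0))-\log_2(v'(0))-\nu(\varphi^{-1}x)+\nu(x)$ for any $v\in V$ with $v0=x$ (independent of $v$), and $\beta(\zeta)^{\mu_\varphi}(x)=\beta(\zeta)^{\mu_\varphi(x)}$. *)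

From HB Require Import structures.
From mathcomp Require Import all_boot all_order all_algebra.
Import Order.TTheory GRing.Theory Num.Theory.
From Stdlib Require Import ClassicalEpsilon.
Set Implicit Arguments. Unset Strict Implicit. Unset Printing Implicit Defensive.

Definition C := nat -> bool.

Definition zeroC : C := fun _ => false.

Definition catC (m : seq bool) (x : C) : C :=
  fun i => if i < size m then nth false m i else x (i - size m).

Definition prefixC (m : seq bool) (x : C) : Prop :=
  forall i, i < size m -> x i = nth false m i.

Definition is_partition (ms : seq (seq bool)) : Prop :=
  forall x : C, exists! k, k < size ms /\ prefixC (nth [::] ms k) x.

Definition continuousC (h : C -> C) : Prop :=
  forall (x : C) (n : nat), exists m : nat, forall y : C,
    (forall i, i < m -> y i = x i) -> forall i, i < n -> h y i = h x i.

Definition is_homeo (h : C -> C) : Prop :=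
  exists h' : C -> C, cancel h h' /\ cancel h' h /\ continuousC h /\ continuousC h'.

Definition inV (v : C -> C) : Prop :=
  is_homeo v /\
  exists ms ms' : seq (seq bool),
    size ms = size ms' /\ is_partition ms /\ is_partition ms' /\
    forall k (x : C), k < size ms ->
      v (catC (nth [::] ms k) x) = catC (nth [::] ms' k) x.

Record homeo := Homeo {
  hfun :> C -> C;
  hinv : C -> C;
  hfunK : cancel hfun hinv;
  hinvK : cancel hinv hfun;
  hfun_cont : continuousC hfun;
  hinv_cont : continuousC hinv }.

Lemma continuousC_comp (g f : C -> C) :
  continuousC g -> continuousC f -> continuousC (g \o f).
Proof.
move=> cg cf x n; have [m1 Hm1] := cg (f x) n; have [m Hm] := cf x m1.
by exists m => y Hy i Hi /=; apply: Hm1 => // j Hj; apply: Hm.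
Qed.

Lemma continuousC_id : continuousC id.
Proof. by move=> x n; exists n => y Hy i Hi; apply: Hy. Qed.

Lemma hcomp_K (p q : homeo) : cancel (hfun p \o hfun q) (hinv q \o hinv p).
Proof. by move=> x /=; rewrite !hfunK. Qed.

Lemma hcomp_Ki (p q : homeo) : cancel (hinv q \o hinv p) (hfun p \o hfun q).
Proof. by move=> x /=; rewrite !hinvK. Qed.

Definition hcomp (p q : homeo) : homeo :=
  @Homeo (hfun p \o hfun q) (hinv q \o hinv p) (hcomp_K p q) (hcomp_Ki p q)
    (continuousC_comp (hfun_cont p) (hfun_cont q))
    (continuousC_comp (hinv_cont q) (hinv_cont p)).

Definition hid : homeo :=
  @Homeo id id (fun x => erefl) (fun x => erefl) continuousC_id continuousC_id.

Definition inQ2 (x : C) : Prop := exists N, forall n, N <= n -> x n = false.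

Definition inStabN (p : homeo) : Prop :=
  (forall v, inV v -> inV (hfun p \o v \o hinv p)) /\
  (forall w, inV w -> exists v, inV v /\ w = hfun p \o v \o hinv p) /\
  (forall x, inQ2 x -> inQ2 (p x)) /\
  (forall y, inQ2 y -> exists x, inQ2 x /\ p x = y).

Local Open Scope ring_scope.

(* log_2 of the slope h'(x) = 2^{|m|-|m'|}, where h(m y) = m' y near x *)
Definition logslope (h : C -> C) (x : C) : int :=
  epsilon (inhabits 0) (fun n : int => exists m m' : seq bool,
    prefixC m x /\ (forall y, h (catC m y) = catC m' y) /\
    n = (size m)%:Z - (size m')%:Z).

(* identification of x in Q_2 with the dyadic rational sum_{n>=1} x_n 2^{-n}
   (bits x_n, n >= 1, are stored at index n-1) *)
Definition dyval (x : C) : rat :=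
  epsilon (inhabits 0) (fun r : rat => exists N : nat,
    (forall n, (N <= n)%N -> x n = false) /\
    r = \sum_(i < N) (nat_of_bool (x i))%:R / 2%:R ^+ i.+1).

(* dyadic valuation: nu 0 = 0, nu (2^k p/q) = k for p, q odd *)
Definition nu (r : rat) : int :=
  epsilon (inhabits 0) (fun k : int =>
    (r = 0 /\ k = 0) \/
    exists p q : int, odd `|p|%N /\ odd `|q|%N /\ r = 2%:R ^ k * p%:~R / q%:~R).

Definition mu (p : homeo) (x : C) : int :=
  let v := epsilon (inhabits id) (fun v : C -> C => inV v /\ v zeroC = x) in
  logslope (hinv p \o v \o hfun p) (hinv p zeroC) - logslope v zeroC
  - nu (dyval (hinv p x)) + nu (dyval x).

Local Close Scope ring_scope.

Local Open Scope group_scope.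

Section GammaDefs.
Variable G : groupType.

Definition central (z : G) : Prop := forall g : G, z * g = g * z.

Definition gpowz (g : G) (n : int) : G :=
  match n with Posz k => g ^+ k | Negz k => (g ^+ k.+1)^-1 end.

Definition is_aut (b : G -> G) : Prop := {morph b : x y / x * y} /\ bijective b.

(* elements of Kbar = prod_{Q_2} Gamma are represented by maps C -> Gamma,
   only their values on Q_2 are relevant *)
Definition inK (k : C -> G) : Prop :=
  exists l : seq C, forall x, inQ2 x -> k x <> 1 -> List.In x l.

(* N_{Kbar}(G): f G f^-1 \subset G and f^-1 G f \subset G inside Kbar x| V,
   where (f,1)(k,v)(f^-1,1) = (f k (f^-1)^v, v) and f^v(x) = f(v^-1 x) *)
Definition inNK (f : C -> G) : Prop :=
  (forall (k : C -> G) (v w : C -> C), inK k -> inV v -> cancel v w -> cancel w v ->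
     inK (fun x => f x * k x * (f (w x))^-1)) /\
  (forall (k : C -> G) (v w : C -> C), inK k -> inV v -> cancel v w -> cancel w v ->
     inK (fun x => (f x)^-1 * k x * f (w x))).

(* Z(Gamma) x Kbar/Z(Gamma): pairs (zeta, f), modulo the relation below *)
Definition QE := (G * (C -> G))%type.

Definition inZK (a : QE) : Prop := central a.1.
Definition inZN (a : QE) : Prop := central a.1 /\ inNK a.2.

Definition qeq (a b : QE) : Prop :=
  a.1 = b.1 /\ exists c : G, central c /\ forall x, inQ2 x -> b.2 x = a.2 x * c.

Definition qmul (a b : QE) : QE := (a.1 * b.1, fun x => a.2 x * b.2 x).

Definition is_quot_aut (P : QE -> Prop) (F : QE -> QE) : Prop :=
  (forall a, P a -> P (F a)) /\
  (forall a b, P a -> P b -> qeq a b -> qeq (F a) (F b)) /\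
  (forall a b, P a -> P b -> qeq (F (qmul a b)) (qmul (F a) (F b))) /\
  (forall a b, P a -> P b -> qeq (F a) (F b) -> qeq a b) /\
  (forall b, P b -> exists a, P a /\ qeq (F a) b).

Definition sigma0 (p : homeo) (b : G -> G) (a : QE) : QE :=
  (b a.1, fun x => b (a.2 (hinv p x)) * gpowz (b a.1) (mu p x)).

End GammaDefs.

(** Everything rests on the behaviour of [mu_phi].  Conjugation by [phi] in
    [Stab_N(Q_2)] preserves slopes at fixed points: the slope of [phi^-1 g phi] at
    [phi^-1 0] is additive in [g] and depends only on the germ of [g] at [0], hence
    equals [c * log_2 g'(0)] for a constant [c]; [c] is a unit, and [c = -1] is ruled
    out because a conjugate of [tau] contracting near [phi^-1 0] is incompatible with
    [tau] pushing every point other than [0] out of [C_0].  So [mu_phi] does not depend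
    on the choice of [v].  Since outside a finite set an element of [V] shifts the
    dyadic valuation by its log-slope, [mu_phi (w x) = mu_phi x] for all but finitely
    many [x], for each [w] in [V]; therefore multiplying by [beta(zeta)^mu_phi] keeps
    [N_Kbar(G)] stable.  The action law is the cocycle identity
    [mu_(phi1 phi2) = mu_phi2 o phi1^-1 + mu_phi1 + const], the constant being absorbed
    by [Z(Gamma)], and injectivity is read off the images of point masses, which
    normalise [G]. *)

From mathcomp Require Import all_boot all_order all_algebra zify ring.
From Stdlib Require Import ClassicalEpsilon FunctionalExtensionality.
Import Order.TTheory GRing.Theory Num.Theory.
Set Implicit Arguments. Unset Strict Implicit. Unset Printing Implicit Defensive.

Definition cdrop (n : nat) (x : C) : C := fun i => x (n + i).
Definition ctake (n : nat) (x : C) : seq bool := mkseq x n.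

Lemma size_ctake n x : size (ctake n x) = n.
Proof. by rewrite size_mkseq. Qed.

Lemma catC_take_drop n x : catC (ctake n x) (cdrop n x) = x.
Proof.
apply: functional_extensionality => i; rewrite /catC size_ctake /cdrop.
by case: ltnP => h; [rewrite nth_mkseq | rewrite subnKC].
Qed.

Lemma prefixC_catC m y : prefixC m (catC m y).
Proof. by move=> i hi; rewrite /catC hi. Qed.
Arguments prefixC_catC : clear implicits.

Lemma cdrop_catC m y : cdrop (size m) (catC m y) = y.
Proof.
by apply: functional_extensionality => i; rewrite /cdrop /catC ltnNge leq_addr addKn.
Qed.

Lemma catC_cat a b y : catC (a ++ b) y = catC a (catC b y).
Proof.
apply: functional_extensionality => i; rewrite /catC size_cat nth_cat.
case: (ltnP i (size a)) => h1; first by rewrite (ltn_addr _ h1).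
have -> : (i < size a + size b) = (i - size a < size b).
  by rewrite -[in RHS](ltn_add2l (size a)) (subnKC h1).
by case: ltnP => // _; rewrite subnDA.
Qed.

Lemma catC_nseq_zero n : catC (nseq n false) zeroC = zeroC.
Proof.
apply: functional_extensionality => i; rewrite /catC size_nseq nth_nseq.
by case: (i < n).
Qed.

Lemma prefixC_ctake m x : prefixC m x -> m = ctake (size m) x.
Proof.
move=> h; apply: (@eq_from_nth _ false); rewrite ?size_ctake // => i hi.
by rewrite nth_mkseq // h.
Qed.

Lemma ctake_prefixC n x : prefixC (ctake n x) x.
Proof. by move=> i; rewrite size_ctake => hi; rewrite nth_mkseq. Qed.
Arguments ctake_prefixC : clear implicits.

Lemma prefixC_ctakeP n x y :
  prefixC (ctake n x) y <-> forall i, i < n -> y i = x i.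
Proof.
split=> h i; last by rewrite size_ctake => hi; rewrite nth_mkseq // h.
by move=> hi; have := h i; rewrite size_ctake nth_mkseq //; apply.
Qed.

Lemma prefixC_catC_cdrop m x : prefixC m x -> x = catC m (cdrop (size m) x).
Proof.
move=> h; rewrite {1}(prefixC_ctake h) -{1}(catC_take_drop (size m) x).
by rewrite -(prefixC_ctake h).
Qed.

Lemma prefixC_extend a b x : prefixC a x -> prefixC b x -> size a <= size b ->
  b = a ++ drop (size a) b.
Proof.
move=> ha hb hab; rewrite -{1}(cat_take_drop (size a) b); congr (_ ++ _).
rewrite (prefixC_ctake ha) (prefixC_ctake hb).
apply: (@eq_from_nth _ false); rewrite ?size_takel ?size_ctake //.
by move=> i hi; rewrite nth_take // !nth_mkseq // (leq_trans hi hab).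
Qed.

Lemma prefixC_catC_le a b x y : prefixC a x -> prefixC b x -> size a <= size b ->
  prefixC a (catC b y).
Proof.
move=> ha hb hl; rewrite (prefixC_extend ha hb hl) catC_cat; exact: prefixC_catC.
Qed.

Lemma prefixC_cons b m x : prefixC (b :: m) x <-> x 0 = b /\ prefixC m (cdrop 1 x).
Proof.
split=> [h | [h0 h] [|i] //= hi]; last exact: h.
by split=> [|i hi]; [exact: (h 0) | rewrite /cdrop (h i.+1)].
Qed.

Lemma prefixC_zero m : prefixC m zeroC -> m = nseq (size m) false.
Proof.
move=> h; apply: (@eq_from_nth _ false); rewrite ?size_nseq // => i hi.
by rewrite -h // nth_nseq hi.
Qed.

Lemma catC_size_inj a b : (forall y, catC a y = catC b y) -> size a = size b.
Proof.
wlog: a b / size a < size b.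
  move=> W h; case: (ltngtP (size a) (size b)) => // hl; first exact: W.
  by symmetry; apply: W => // y; rewrite h.
move=> hl h; exfalso.
have := congr1 (fun f => f (size a)) (h (fun _ => ~~ nth false b (size a))).
by rewrite /catC ltnn hl; case: (nth false b (size a)).
Qed.

(** * Local slopes *)

Local Open Scope ring_scope.

Definition affine_at (h : C -> C) (x : C) (m m' : seq bool) :=
  prefixC m x /\ forall y, h (catC m y) = catC m' y.

Definition lendiff (m m' : seq bool) : int := (size m)%:Z - (size m')%:Z.

Lemma lendiff_cat m m' r : lendiff (m ++ r) (m' ++ r) = lendiff m m'.
Proof. rewrite /lendiff !size_cat !PoszD; lia. Qed.

Lemma lendiff_trans a b c : lendiff a b + lendiff b c = lendiff a c.
Proof. rewrite /lendiff; lia. Qed.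

Lemma affine_at_cat h x m m' r : affine_at h x m m' -> prefixC (m ++ r) x ->
  affine_at h x (m ++ r) (m' ++ r).
Proof. by move=> [_ hw] hp; split => // y; rewrite !catC_cat hw. Qed.

Lemma affine_at_image h x m m' : affine_at h x m m' -> prefixC m' (h x).
Proof.
by move=> [hp hw]; rewrite (prefixC_catC_cdrop hp) hw; apply: prefixC_catC.
Qed.

Lemma affine_at_lendiff h x m1 m1' m2 m2' :
  affine_at h x m1 m1' -> affine_at h x m2 m2' -> lendiff m1 m1' = lendiff m2 m2'.
Proof.
wlog hl: m1 m1' m2 m2' / (size m1 <= size m2)%N.
  move=> W h1 h2; case: (leqP (size m1) (size m2)) => hl; first exact: W.
  by symmetry; apply: W => //; apply: ltnW.
move=> h1 h2; have e := prefixC_extend h1.1 h2.1 hl.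
have h3 : affine_at h x m2 (m1' ++ drop (size m1) m2).
  by rewrite {1}e; apply: affine_at_cat h1 _; rewrite -e; exact: h2.1.
have hs : size (m1' ++ drop (size m1) m2) = size m2'.
  by apply: catC_size_inj => y; rewrite -h3.2 h2.2.
by rewrite -(lendiff_cat m1 m1' (drop (size m1) m2)) -e /lendiff hs.
Qed.

Lemma logslope_affine_at h x m m' : affine_at h x m m' -> logslope h x = lendiff m m'.
Proof.
move=> hw; rewrite /logslope.
match goal with |- epsilon ?i ?P = _ => have : exists n, P n end.
  by exists (lendiff m m'), m, m'; case: hw.
move=> /epsilon_spec H; have [a [a' [h1 [h2 ->]]]] := H (inhabits 0).
exact: (@affine_at_lendiff h x).
Qed.

Lemma affine_at_refine h x m m' n : affine_at h x m m' -> (size m <= n)%N ->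
  exists m'', affine_at h x (ctake n x) m'' /\ lendiff (ctake n x) m'' = lendiff m m'.
Proof.
move=> hw hl; rewrite -(size_ctake n x) in hl.
have e := prefixC_extend hw.1 (ctake_prefixC n x) hl.
exists (m' ++ drop (size m) (ctake n x)); split.
  by rewrite {1}e; apply: affine_at_cat => //; rewrite -e; exact: ctake_prefixC.
by rewrite {1}e lendiff_cat.
Qed.

Lemma affine_at_comp g h x m m' n n' :
  affine_at h x m m' -> affine_at g (h x) n n' ->
  exists M M', affine_at (g \o h) x M M' /\ lendiff M M' = lendiff m m' + lendiff n n'.
Proof.
move=> hh hg.
have [m2 [hw2 hd2]] := affine_at_refine (n := (size m + size n)%N) hh (leq_addr _ _).
have hs : size m2 = (size m' + size n)%N.
  by move: hd2; rewrite /lendiff size_ctake => e; lia.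
have hle : (size n <= size m2)%N by rewrite hs leq_addl.
have [n2 [hg2 hd3]] := affine_at_refine hg hle.
rewrite -(prefixC_ctake (affine_at_image hw2)) in hg2 hd3.
exists (ctake (size m + size n) x), n2; split.
  by split=> [|y /=]; [exact: hw2.1 | rewrite hw2.2 hg2.2].
by rewrite -(lendiff_trans _ m2) hd3 hd2.
Qed.

Lemma affine_at_eq_near h1 h2 x m m' m0 : affine_at h1 x m m' -> prefixC m0 x ->
  (forall y, prefixC m0 y -> h1 y = h2 y) ->
  exists M M', affine_at h2 x M M' /\ lendiff M M' = lendiff m m'.
Proof.
move=> hw hp he.
have [m2 [hw2 hd2]] := affine_at_refine (n := (size m + size m0)%N) hw (leq_addr _ _).
exists (ctake (size m + size m0) x), m2; split => //.
split=> [|y]; first exact: ctake_prefixC.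
rewrite -he ?hw2.2 //; apply: prefixC_catC_le hp (ctake_prefixC _ _) _.
by rewrite size_ctake leq_addl.
Qed.

Definition locally_affine h x := exists m m', affine_at h x m m'.
Definition piecewise_affine h := forall x, locally_affine h x.

Lemma locally_affine_id x : locally_affine id x.
Proof. by exists [::], [::]; split => // i. Qed.

Lemma logslope_id x : logslope id x = 0.
Proof.
have hw : affine_at id x [::] [::] by split => // i.
by rewrite (logslope_affine_at hw) /lendiff.
Qed.

Lemma locally_affine_comp g h x :
  locally_affine h x -> locally_affine g (h x) -> locally_affine (g \o h) x.
Proof.
move=> [m [m' hh]] [n [n' hg]].
by have [M [M' [hw _]]] := affine_at_comp hh hg; exists M, M'.
Qed.

Lemma piecewise_affine_comp g h :
  piecewise_affine g -> piecewise_affine h -> piecewise_affine (g \o h).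
Proof. by move=> hg hh x; apply: locally_affine_comp. Qed.

Lemma logslope_comp g h x : locally_affine h x -> locally_affine g (h x) ->
  logslope (g \o h) x = logslope g (h x) + logslope h x.
Proof.
move=> [m [m' hh]] [n [n' hg]]; have [M [M' [hw hd]]] := affine_at_comp hh hg.
by rewrite (logslope_affine_at hw) (logslope_affine_at hh) (logslope_affine_at hg) hd addrC.
Qed.

Lemma logslope_eq_near h1 h2 x m0 : locally_affine h1 x -> prefixC m0 x ->
  (forall y, prefixC m0 y -> h1 y = h2 y) -> logslope h2 x = logslope h1 x.
Proof.
move=> [m [m' hw]] hp he; have [M [M' [hw2 hd]]] := affine_at_eq_near hw hp he.
by rewrite (logslope_affine_at hw2) (logslope_affine_at hw).
Qed.

Local Close Scope ring_scope.

(** * Partitions into cylinders and Thompson's group V *)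

Definition prefb (m : seq bool) (x : C) : bool :=
  all (fun i => x i == nth false m i) (iota 0 (size m)).

Lemma prefbP m x : reflect (prefixC m x) (prefb m x).
Proof.
apply: (iffP allP) => h; first by move=> i hi; apply/eqP/h; rewrite mem_iota.
by move=> i; rewrite mem_iota => /andP[_ hi]; apply/eqP/h.
Qed.

Lemma partition_find ms x k : is_partition ms -> k < size ms ->
  prefixC (nth [::] ms k) x -> find (prefb^~ x) ms = k.
Proof.
move=> hp hk hpk; have [k0 [_ hu]] := hp x.
have hhas : has (prefb^~ x) ms by apply/(has_nthP [::]); exists k => //; apply/prefbP.
have hf : find (prefb^~ x) ms < size ms by rewrite -has_find.
have hn := nth_find [::] hhas.
by rewrite -(hu _ (conj hk hpk)); symmetry; apply: hu; split => //; apply/prefbP.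
Qed.

Lemma partition_cover ms x : is_partition ms ->
  exists2 k, k < size ms & x = catC (nth [::] ms k) (cdrop (size (nth [::] ms k)) x).
Proof. by move=> hp; have [k [[hk hpk] _]] := hp x; exists k; last exact: prefixC_catC_cdrop. Qed.

Lemma partition_nil : is_partition [:: [::]].
Proof. by move=> x; exists 0; split=> [|[|k] []] //; split => // i. Qed.

Lemma partition_cons b ms1 ms2 : is_partition ms1 -> is_partition ms2 ->
  is_partition (map (cons b) ms1 ++ map (cons (~~ b)) ms2).
Proof.
move=> hp1 hp2 x; set ms := _ ++ _.
have nthL k : k < size ms1 -> nth [::] ms k = b :: nth [::] ms1 k.
  by move=> hk; rewrite nth_cat size_map hk (nth_map [::]).
have nthR k : size ms1 <= k < size ms1 + size ms2 ->
    nth [::] ms k = ~~ b :: nth [::] ms2 (k - size ms1).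
  move=> /andP[hk hk2]; rewrite nth_cat size_map ltnNge hk /= (nth_map [::]) //.
  by rewrite ltn_subLR.
rewrite size_cat !size_map.
have [hb | hb] := eqVneq (x 0) b.
  have [k [[hk hpk] hu]] := hp1 (cdrop 1 x).
  exists k; split.
    by split; [exact: ltn_addr | rewrite nthL //; apply/prefixC_cons].
  move=> k' [hk' hp']; case: (ltnP k' (size ms1)) => hl.
    by apply: hu; move: hp'; rewrite nthL // => /prefixC_cons [].
  by move: hp'; rewrite nthR ?hl // => /prefixC_cons [hx _]; move: hb; rewrite hx; case: (b).
have hb' : x 0 = ~~ b by move: hb; case: (b); case: (x 0).
have [k [[hk hpk] hu]] := hp2 (cdrop 1 x).
exists (size ms1 + k); split.
  split; first by rewrite ltn_add2l.
  by rewrite nthR ?leq_addr ?ltn_add2l // addKn; apply/prefixC_cons.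
move=> k' [hk' hp']; case: (ltnP k' (size ms1)) => hl.
  by move: hp'; rewrite nthL // => /prefixC_cons [hx _]; move: hb'; rewrite hx; case: (b).
move: hp'; rewrite nthR ?hl // => /prefixC_cons [_ h].
by rewrite (hu (k' - size ms1)) ?subnKC // ltn_subLR.
Qed.

Definition pvmap (ms ms' : seq (seq bool)) (x : C) : C :=
  let k := find (prefb^~ x) ms in
  catC (nth [::] ms' k) (cdrop (size (nth [::] ms k)) x).

Lemma pvmap_catC ms ms' k y : is_partition ms -> k < size ms ->
  pvmap ms ms' (catC (nth [::] ms k) y) = catC (nth [::] ms' k) y.
Proof.
by move=> hp hk; rewrite /pvmap (partition_find hp hk (prefixC_catC _ _)) cdrop_catC.
Qed.

Lemma pvmapK ms ms' : is_partition ms -> is_partition ms' -> size ms = size ms' ->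
  cancel (pvmap ms ms') (pvmap ms' ms).
Proof.
move=> hp hp' hs x; have [k hk ->] := partition_cover x hp.
by rewrite pvmap_catC // pvmap_catC // -hs.
Qed.

Lemma continuous_pvmap ms ms' : is_partition ms -> continuousC (pvmap ms ms').
Proof.
move=> hp x n; have [k [[hk hpk] _]] := hp x.
exists (size (nth [::] ms k) + n) => y hy i hi.
have hpy : prefixC (nth [::] ms k) y by move=> j hj; rewrite hy ?hpk // ltn_addr.
rewrite /pvmap (partition_find hp hk hpk) (partition_find hp hk hpy) /catC.
case: ifP => // _; rewrite /cdrop hy // ltn_add2l.
by apply: leq_ltn_trans hi; exact: leq_subr.
Qed.

Lemma inV_pvmap ms ms' : is_partition ms -> is_partition ms' -> size ms = size ms' ->
  inV (pvmap ms ms').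
Proof.
move=> hp hp' hs; split.
  by exists (pvmap ms' ms); do ![split]; [exact: pvmapK | exact: pvmapK |
    exact: continuous_pvmap | exact: continuous_pvmap].
by exists ms, ms'; do 3 split => //; move=> k y hk; rewrite pvmap_catC.
Qed.

Lemma inV_piecewise_affine v : inV v -> piecewise_affine v.
Proof.
move=> [_ [ms [ms' [hs [hp [hp' he]]]]]] x.
have [k [[hk hpk] _]] := hp x; exists (nth [::] ms k), (nth [::] ms' k).
by split => // y; rewrite he.
Qed.

Lemma inV_can v w : inV v -> cancel v w -> cancel w v -> inV w.
Proof.
move=> [[h' [c1 [c2 [cc1 cc2]]]] [ms [ms' [hs [hp [hp' he]]]]]] k1 k2.
have ew : w = h' by apply: functional_extensionality => x; rewrite -{1}(c2 x) k1.
split; first by exists v; rewrite ew.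
exists ms', ms; do 3 split => //; move=> k y hk.
have hk' : k < size ms by rewrite hs.
by rewrite -(he k y hk') k1.
Qed.

Lemma inV_eqfun v v' : inV v -> v =1 v' -> inV v'.
Proof. by move=> h /functional_extensionality <-. Qed.

Lemma inV_inv v : inV v -> exists w, [/\ cancel v w, cancel w v & inV w].
Proof.
by move=> hv; have [w [k1 [k2 _]]] := hv.1; exists w; split; last exact: inV_can hv k1 k2.
Qed.

Lemma inQ2_catC m y : inQ2 y -> inQ2 (catC m y).
Proof.
move=> [N hN]; exists (size m + N) => i hi; rewrite /catC ifF.
  by apply: hN; rewrite leq_subRL // (leq_trans (leq_addr N _) hi).
by apply/negbTE; rewrite -leqNgt (leq_trans (leq_addr N _) hi).
Qed.

Lemma inQ2_zero : inQ2 zeroC.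
Proof. by exists 0. Qed.

Lemma inQ2_cdrop n x : inQ2 x -> inQ2 (cdrop n x).
Proof. by move=> [N hN]; exists N => i hi; rewrite /cdrop hN // (leq_trans hi (leq_addl _ _)). Qed.

Lemma inQ2_ctake x N : (forall n, N <= n -> x n = false) -> x = catC (ctake N x) zeroC.
Proof.
move=> h; apply: functional_extensionality => i; rewrite /catC size_ctake.
by case: ltnP => hi; [rewrite nth_mkseq | exact: h].
Qed.

Lemma inV_inQ2 v x : inV v -> inQ2 x -> inQ2 (v x).
Proof.
move=> [_ [ms [ms' [hs [hp [hp' he]]]]]] hx.
have [k hk ->] := partition_cover x hp; rewrite he //.
exact: inQ2_catC (inQ2_cdrop _ hx).
Qed.

Fixpoint branch_partition (m : seq bool) : seq (seq bool) :=
  if m is b :: m' then map (cons b) (branch_partition m') ++ [:: [:: ~~ b]]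
  else [:: [::]].

Lemma branch_partitionP m : is_partition (branch_partition m).
Proof. by elim: m => [|b m IH]; [exact: partition_nil | exact: (partition_cons b IH partition_nil)]. Qed.

Lemma size_branch_partition m : size (branch_partition m) = (size m).+1.
Proof. by elim: m => //= b m IH; rewrite size_cat size_map IH addn1. Qed.

Lemma nth_branch_partition0 m : nth [::] (branch_partition m) 0 = m.
Proof.
elim: m => //= b m IH; rewrite nth_cat size_map size_branch_partition /=.
by rewrite (nth_map [::]) ?size_branch_partition // IH.
Qed.

Lemma inV_zero_to q : inQ2 q -> exists s, inV s /\ s zeroC = q.
Proof.
move=> [N hN]; set P := branch_partition.
exists (pvmap (P (nseq N false)) (P (ctake N q))); split.
  apply: inV_pvmap; try exact: branch_partitionP.
  by rewrite !size_branch_partition size_nseq size_ctake.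
have -> : zeroC = catC (nth [::] (P (nseq N false)) 0) zeroC.
  by rewrite nth_branch_partition0 catC_nseq_zero.
rewrite pvmap_catC ?size_branch_partition ?nth_branch_partition0 //.
  by rewrite -inQ2_ctake.
exact: branch_partitionP.
Qed.

(** [tau] fixes [0] with slope 2 and eventually pushes every other point into [C_1]. *)
Definition tau_dom : seq (seq bool) := [:: [:: false; false]; [:: false; true]; [:: true]].
Definition tau_cod : seq (seq bool) := [:: [:: false]; [:: true; false]; [:: true; true]].

Lemma partition_halves : is_partition [:: [:: false]; [:: true]].
Proof. exact: (partition_cons false partition_nil partition_nil). Qed.

Lemma partition_tau_dom : is_partition tau_dom.
Proof. exact: (partition_cons false partition_halves partition_nil). Qed.

Lemma partition_tau_cod : is_partition tau_cod.
Proof. exact: (partition_cons false partition_nil partition_halves). Qed.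

Definition tau := pvmap tau_dom tau_cod.
Definition tau_inv := pvmap tau_cod tau_dom.

Lemma inV_tau : inV tau.
Proof. exact: inV_pvmap partition_tau_dom partition_tau_cod _. Qed.

Lemma inV_tau_inv : inV tau_inv.
Proof. exact: inV_pvmap partition_tau_cod partition_tau_dom _. Qed.

Lemma tau_invK : cancel tau_inv tau.
Proof. exact: pvmapK partition_tau_cod partition_tau_dom _. Qed.

Lemma affine_at_tau0 : affine_at tau zeroC [:: false; false] [:: false].
Proof.
split; first by rewrite -(catC_nseq_zero 2); apply: prefixC_catC.
by move=> y; apply: (@pvmap_catC _ _ 0 y partition_tau_dom).
Qed.

Lemma affine_at_tau_inv0 : affine_at tau_inv zeroC [:: false] [:: false; false].
Proof.
split; first by rewrite -(catC_nseq_zero 1); apply: prefixC_catC.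
by move=> y; apply: (@pvmap_catC _ _ 0 y partition_tau_cod).
Qed.

Lemma tau_zero : tau zeroC = zeroC.
Proof. by rewrite -{1}(catC_nseq_zero 2) affine_at_tau0.2 (catC_nseq_zero 1). Qed.

Lemma tau_inv_zero : tau_inv zeroC = zeroC.
Proof. by rewrite -{1}(catC_nseq_zero 1) affine_at_tau_inv0.2 (catC_nseq_zero 2). Qed.

Lemma logslope_tau0 : logslope tau zeroC = 1%R.
Proof. by rewrite (logslope_affine_at affine_at_tau0). Qed.

Lemma logslope_tau_inv0 : logslope tau_inv zeroC = (-1)%R.
Proof. by rewrite (logslope_affine_at affine_at_tau_inv0). Qed.

Lemma tau_head k z : k < 3 -> prefixC (nth [::] tau_dom k) z ->
  tau z = catC (nth [::] tau_cod k) (cdrop (size (nth [::] tau_dom k)) z).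
Proof. by move=> hk /prefixC_catC_cdrop {1}->; exact: pvmap_catC partition_tau_dom hk. Qed.

Lemma tau_head1 z : z 0 = true -> tau z 0 = true.
Proof. by move=> h; rewrite (@tau_head 2) // => -[]. Qed.

Lemma tau_head01 z : z 0 = false -> z 1 = true -> tau z 0 = true.
Proof. by move=> h0 h1; rewrite (@tau_head 1) // => -[|[]]. Qed.

Lemma tau_head00 z : z 0 = false -> z 1 = false -> tau z = cdrop 1 z.
Proof.
move=> h0 h1; rewrite (@tau_head 0) // => [|[|[]]] //.
apply: functional_extensionality => -[|i]; rewrite /catC /cdrop /=; first by rewrite h1.
by rewrite subn1 addnS.
Qed.

Lemma iter_tau_head1 z n : z 0 = true -> iter n tau z 0 = true.
Proof. by move=> h; elim: n => //= n IH; exact: tau_head1. Qed.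

Lemma iter_tau_first_one z j : z j = true -> (forall i, i < j -> z i = false) ->
  forall n, j <= n -> iter n tau z 0 = true.
Proof.
elim: j z => [|j IH] z hj hlt [|n] // hn; try exact: iter_tau_head1.
rewrite iterSr; case: j IH hj hlt hn => [|j] IH hj hlt hn.
  by apply: iter_tau_head1; apply: tau_head01 => //; apply: hlt.
rewrite tau_head00 ?hlt //; apply: IH => // i hi.
by rewrite /cdrop add1n; exact: hlt.
Qed.

Lemma iter_tau_nonzero z : z <> zeroC -> exists N, forall n, N <= n -> iter n tau z 0 = true.
Proof.
move=> hz; have hex : exists j, z j.
  apply: NNPP => hn; apply: hz; apply: functional_extensionality => j.
  by apply/negbTE/negP => hj; apply: hn; exists j.
case: (ex_minnP hex) => j hj hmin; exists j; apply: iter_tau_first_one => // i hi.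
by apply/negbTE/negP => /hmin; rewrite leqNgt hi.
Qed.

(** * Slopes at fixed points are invariant under [Stab_N(Q_2)] *)

Local Open Scope ring_scope.

Lemma logslope_conj_fixed s si f z :
  piecewise_affine s -> piecewise_affine si -> piecewise_affine f ->
  cancel s si -> cancel si s -> f z = z -> logslope (s \o f \o si) (s z) = logslope f z.
Proof.
move=> cs csi cf k1 k2 fz.
have hid : logslope s z + logslope si (s z) = 0.
  rewrite addrC -logslope_comp //.
  by rewrite (_ : si \o s = id) ?logslope_id //; apply: functional_extensionality.
have csz := cs z; have cfz := cf z; have csiz := csi (s z).
have csf : locally_affine (s \o f) (si (s z)).
  by rewrite k1; apply: locally_affine_comp; rewrite ?fz.
rewrite logslope_comp // k1 logslope_comp ?fz //; lia.
Qed.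

Lemma logslope_fixed0 g : locally_affine g zeroC -> g zeroC = zeroC ->
  exists a b : nat, a%:Z - b%:Z = logslope g zeroC /\
    forall y, g (catC (nseq a false) y) = catC (nseq b false) y.
Proof.
move=> [m [m' hw]] g0; exists (size m), (size m'); split.
  by rewrite (logslope_affine_at hw).
have hm' : prefixC m' zeroC by rewrite -g0; apply: affine_at_image hw.
by move=> y; rewrite -(prefixC_zero hw.1) -(prefixC_zero hm') hw.2.
Qed.

Lemma catC_nseqD a b y :
  catC (nseq (a + b) false) y = catC (nseq a false) (catC (nseq b false) y).
Proof. by rewrite nseqD catC_cat. Qed.

Lemma logslope_fixed0_germ g1 g2 :
  locally_affine g1 zeroC -> g1 zeroC = zeroC ->
  locally_affine g2 zeroC -> g2 zeroC = zeroC ->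
  logslope g1 zeroC = logslope g2 zeroC ->
  exists n, forall y, g1 (catC (nseq n false) y) = g2 (catC (nseq n false) y).
Proof.
move=> w1 f1 w2 f2 e.
have [a1 [b1 [e1 h1]]] := logslope_fixed0 w1 f1.
have [a2 [b2 [e2 h2]]] := logslope_fixed0 w2 f2.
exists (a1 + a2)%N => y.
rewrite [in LHS]catC_nseqD h1 -catC_nseqD [in RHS]addnC [in RHS]catC_nseqD h2.
rewrite -catC_nseqD.
by have -> : (b1 + a2 = b2 + a1)%N by move: e; rewrite -e1 -e2; lia.
Qed.

Lemma contracting_fixed_point h q m m' : inQ2 q -> h q = q -> affine_at h q m m' ->
  lendiff m m' = -1 ->
  q = catC m zeroC /\ forall y, h (catC m y) = catC m (catC [:: false] y).
Proof.
move=> hq hfix hw hd.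
have hsz : size m' = (size m).+1 by move: hd; rewrite /lendiff; lia.
have hm' : prefixC m' q by rewrite -hfix; apply: affine_at_image hw.
have em : m' = m ++ drop (size m) m' by apply: prefixC_extend hw.1 hm' _; rewrite hsz.
move: em; set r := drop _ _.
have : size r = 1%N by rewrite size_drop hsz subSn // subnn.
case: r => [|b [|]] // _ em.
set d := cdrop (size m) q; have eq := prefixC_catC_cdrop hw.1; rewrite -/d in eq.
have eq2 : q = catC (m ++ [:: b]) d by rewrite -em -hw.2 -eq hfix.
have hb i : q (size m + i)%N = b.
  elim: i => [|i IH]; first by rewrite eq2 /catC size_cat addn0 addn1 ltnSn nth_cat ltnn subnn.
  rewrite [in LHS]eq2 /catC size_cat /= ifF; last by apply/negbTE; rewrite -leqNgt; lia.
  by rewrite -IH /d /cdrop; congr q; lia.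
have b0 : b = false by have [N hN] := hq; rewrite -(hb N) hN // leq_addl.
have dz : d = zeroC by apply: functional_extensionality => i; rewrite /d /cdrop hb b0.
by rewrite -dz -b0; split => // y; rewrite hw.2 em catC_cat.
Qed.

Lemma iter_contracting h m n y :
  (forall y, h (catC m y) = catC m (catC [:: false] y)) ->
  iter n h (catC m y) = catC m (catC (nseq n false) y).
Proof.
move=> hc; elim: n => [|n IH] /=.
  by congr catC; apply: functional_extensionality => i; rewrite /catC subn0.
by rewrite IH hc -[catC [:: false] _]catC_cat.
Qed.

Lemma catC_nseq_agree m n y i : (i < size m + n)%N ->
  catC m (catC (nseq n false) y) i = catC m zeroC i.
Proof.
move=> hi; rewrite /catC; case: ltnP => // him.
have hlt : (i - size m < n)%N by rewrite ltn_subLR.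
by rewrite size_nseq hlt nth_nseq hlt.
Qed.

Section ConjugateSlope.
Variable p : homeo.
Hypothesis hp : inStabN p.

Local Notation ph := (hfun p).
Local Notation phi := (hinv p).
Local Notation q := (hinv p zeroC).

Lemma inV_conj v : inV v -> inV (ph \o v \o phi).
Proof. exact: hp.1. Qed.

Lemma inV_conj_inv v : inV v -> inV (phi \o v \o ph).
Proof.
move=> hv; have [v' [hv' e]] := hp.2.1 v hv.
by apply: (inV_eqfun hv') => x /=; rewrite e /= !hfunK.
Qed.

Lemma inQ2_stab x : inQ2 x -> inQ2 (ph x).
Proof. exact: hp.2.2.1. Qed.

Lemma inQ2_stab_inv x : inQ2 x -> inQ2 (phi x).
Proof. by move=> hx; have [x' [hx' <-]] := hp.2.2.2 x hx; rewrite hfunK. Qed.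

Lemma conj_comp g h : phi \o (g \o h) \o ph = (phi \o g \o ph) \o (phi \o h \o ph).
Proof. by apply: functional_extensionality => x /=; rewrite hinvK. Qed.

Lemma conj_id : phi \o id \o ph = id.
Proof. by apply: functional_extensionality => x /=; rewrite hfunK. Qed.

Definition conj_affine g := piecewise_affine g /\ piecewise_affine (phi \o g \o ph).

Lemma conj_affine_inV v : inV v -> conj_affine v.
Proof. by move=> hv; split; apply: inV_piecewise_affine => //; apply: inV_conj_inv. Qed.

Lemma conj_affine_comp g h : conj_affine g -> conj_affine h -> conj_affine (g \o h).
Proof.
move=> [h1 h2] [h3 h4]; split; first exact: piecewise_affine_comp.
by rewrite conj_comp; apply: piecewise_affine_comp.
Qed.

Lemma conj_affine_iter f n : conj_affine f -> conj_affine (iter n f).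
Proof.
move=> gf; elim: n => [|n IH] /=; last exact: conj_affine_comp.
by rewrite /conj_affine conj_id; split=> x; apply: locally_affine_id.
Qed.

Definition conj_logslope g := logslope (phi \o g \o ph) q.

Lemma conj_logslope_id : conj_logslope id = 0.
Proof. by rewrite /conj_logslope conj_id logslope_id. Qed.

Lemma conj_logslope_comp g h : conj_affine g -> conj_affine h -> h zeroC = zeroC ->
  conj_logslope (g \o h) = conj_logslope g + conj_logslope h.
Proof.
move=> [c1 c1'] [c2 c2'] f; rewrite /conj_logslope conj_comp logslope_comp //.
by rewrite /= hinvK f.
Qed.

Lemma conj_logslope_germ g1 g2 : conj_affine g1 -> conj_affine g2 ->
  g1 zeroC = zeroC -> g2 zeroC = zeroC ->
  logslope g1 zeroC = logslope g2 zeroC -> conj_logslope g1 = conj_logslope g2.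
Proof.
move=> [c1 c1'] [c2 c2'] f1 f2 e.
have [n hn] := logslope_fixed0_germ (c1 zeroC) f1 (c2 zeroC) f2 e.
have [M hM] := hfun_cont p q n.
rewrite /conj_logslope; symmetry; apply: (logslope_eq_near (m0 := ctake M q)) => //.
  exact: ctake_prefixC.
move=> y /prefixC_ctakeP hy /=.
have hpre : prefixC (nseq n false) (ph y).
  move=> i; rewrite size_nseq => hi; rewrite nth_nseq hi (hM y hy i hi) hinvK //.
by rewrite (prefixC_catC_cdrop hpre) size_nseq hn.
Qed.

Lemma conj_logslope_iter f n : conj_affine f -> f zeroC = zeroC ->
  conj_logslope (iter n f) = n%:Z * conj_logslope f /\
  logslope (iter n f) zeroC = n%:Z * logslope f zeroC.
Proof.
move=> gf f0; have fi k : iter k f zeroC = zeroC by elim: k => //= k ->.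
elim: n => [|n [IH1 IH2]]; first by rewrite /= conj_logslope_id logslope_id !mul0r.
have gi := conj_affine_iter n gf; have [cf _] := gf; have [ci _] := gi.
rewrite (_ : iter n.+1 f = f \o iter n f) // (conj_logslope_comp gf gi (fi n)).
rewrite logslope_comp ?fi //= IH1 IH2 -[n.+1]addn1 PoszD !mulrDl !mul1r.
by split; rewrite addrC.
Qed.

Lemma conj_logslope_tau_inv : conj_logslope tau_inv = - conj_logslope tau.
Proof.
have ga := conj_affine_inV inV_tau; have gb := conj_affine_inV inV_tau_inv.
have := conj_logslope_comp ga gb tau_inv_zero.
rewrite (_ : tau \o tau_inv = id) ?conj_logslope_id; last first.
  by apply: functional_extensionality => y /=; rewrite tau_invK.
by move/eqP; rewrite eq_sym addrC addr_eq0 => /eqP.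
Qed.

Lemma conj_logslope_linear g : conj_affine g -> g zeroC = zeroC ->
  conj_logslope g = logslope g zeroC * conj_logslope tau.
Proof.
move=> gg g0; set n := `|logslope g zeroC|%N.
have [f [gf f0 [k1 k2]]] : exists f, [/\ conj_affine f, f zeroC = zeroC &
    conj_logslope (iter n f) = logslope g zeroC * conj_logslope tau /\
    logslope (iter n f) zeroC = logslope g zeroC].
  case: (ltP (logslope g zeroC) 0) => hs.
    have hn : n%:Z = - logslope g zeroC by rewrite abszE ltr0_norm.
    exists tau_inv; split; [exact: conj_affine_inV inV_tau_inv | exact: tau_inv_zero |].
    have [-> ->] := conj_logslope_iter n (conj_affine_inV inV_tau_inv) tau_inv_zero.
    by rewrite conj_logslope_tau_inv logslope_tau_inv0 hn mulrNN mulrN1 opprK.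
  have hn : n%:Z = logslope g zeroC by rewrite abszE ger0_norm.
  exists tau; split; [exact: conj_affine_inV inV_tau | exact: tau_zero |].
  have [-> ->] := conj_logslope_iter n (conj_affine_inV inV_tau) tau_zero.
  by rewrite logslope_tau0 hn mulr1.
have f0n : iter n f zeroC = zeroC by elim: (n) => //= k ->.
by rewrite (conj_logslope_germ gg (conj_affine_iter n gf) g0 f0n) ?k1 ?k2.
Qed.

Lemma exists_conj_logslope1 :
  exists g, [/\ conj_affine g, g zeroC = zeroC & conj_logslope g = 1].
Proof.
have [s [hs s0]] := inV_zero_to (inQ2_stab_inv inQ2_zero).
have [si [k1 k2 hsi]] := inV_inv hs.
set rho := s \o tau \o si.
have crho : piecewise_affine rho.
  apply: piecewise_affine_comp; last exact: inV_piecewise_affine.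
  by apply: piecewise_affine_comp; apply: inV_piecewise_affine; [exact: hs | exact: inV_tau].
have rho_q : rho q = q by rewrite /rho /= -s0 k1 tau_zero.
have erho : phi \o (ph \o rho \o phi) \o ph = rho.
  by apply: functional_extensionality => y /=; rewrite !hfunK.
exists (ph \o rho \o phi); split.
- split; last by rewrite erho.
  have -> : ph \o rho \o phi = (ph \o s \o phi) \o (ph \o tau \o phi) \o (ph \o si \o phi).
    by apply: functional_extensionality => y /=; rewrite !hfunK.
  apply: piecewise_affine_comp; last exact/inV_piecewise_affine/inV_conj.
  apply: piecewise_affine_comp; apply/inV_piecewise_affine/inV_conj; [exact: hs | exact: inV_tau].
- by rewrite /= rho_q hinvK.
rewrite /conj_logslope erho -s0 logslope_conj_fixed ?logslope_tau0 ?tau_zero //.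
all: by apply: inV_piecewise_affine => //; exact: inV_tau.
Qed.

Lemma conj_logslope_tau_unit : conj_logslope tau = 1 \/ conj_logslope tau = -1.
Proof.
have [g [gg g0 e1]] := exists_conj_logslope1.
have := conj_logslope_linear gg g0; rewrite e1 => /esym /intUnitRing.unitzPl.
by rewrite qualifE => /orP[/eqP -> | /eqP ->]; [left | right].
Qed.

(** If [phi^-1 tau phi] contracted near [q], iterating it on a point [z] near [q]
    would stay near [q], while iterating [tau] on [phi z <> 0] leaves the cylinder [C_0]. *)
Lemma conj_logslope_tau_neqN1 : conj_logslope tau <> -1.
Proof.
move=> hc; set psi := phi \o tau \o ph.
have [m [m' hw]] := inV_piecewise_affine (inV_conj_inv inV_tau) q.
have psi_q : psi q = q by rewrite /psi /= hinvK tau_zero.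
have hd : lendiff m m' = -1 by rewrite -(logslope_affine_at hw) -hc.
have [eq hpsi] := contracting_fixed_point (inQ2_stab_inv inQ2_zero) psi_q hw hd.
set z := catC m (catC [:: true] zeroC).
have hz : ph z <> zeroC.
  move=> e; have /(congr1 (fun x => x (size m))) : z = q by rewrite -e hfunK.
  by rewrite eq /z /catC ltnn subnn.
have [N hN] := iter_tau_nonzero hz.
have [M hM] := hfun_cont p q 1.
have iter_conj n : iter n tau (ph z) = ph (iter n psi z).
  by elim: n => //= n ->; rewrite /psi /= hinvK.
have := hN (N + M)%N (leq_addr _ _); rewrite iter_conj iter_contracting //.
rewrite (hM _ _ 0) ?hinvK // => i hi.
by rewrite eq catC_nseq_agree // (leq_trans hi) // addnA leq_addl.
Qed.

Lemma conj_logslope_tau : conj_logslope tau = 1.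
Proof. by case: conj_logslope_tau_unit => // /conj_logslope_tau_neqN1. Qed.

Lemma conj_logslope_fixed0 g : conj_affine g -> g zeroC = zeroC ->
  conj_logslope g = logslope g zeroC.
Proof. by move=> gg g0; rewrite conj_logslope_linear // conj_logslope_tau mulr1. Qed.

End ConjugateSlope.

(** * Dyadic valuation of points of [Q_2] *)

Lemma odd_intr_neq0 (b : int) : odd `|b|%N -> (b%:~R : rat) != 0.
Proof. by move=> h; rewrite intr_eq0; apply/eqP => e; move: h; rewrite e. Qed.

Lemma dyadic_exponent_unique (k k' a b a' b' : int) : odd `|a|%N -> odd `|b|%N ->
  odd `|a'|%N -> odd `|b'|%N ->
  (2%:R ^ k * a%:~R / b%:~R = 2%:R ^ k' * a'%:~R / b'%:~R :> rat) -> k = k'.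
Proof.
wlog hk: k k' a b a' b' / k <= k'.
  move=> W ha hb ha' hb' e; case: (lerP k k') => hk; first exact: (W k k' a b a' b').
  by symmetry; apply: (W k' k a' b' a b (ltW hk)) => //; rewrite e.
move=> ha hb ha' hb' e; set n := `|k' - k|%N.
have hn : k' = k + n%:Z by rewrite /n; lia.
rewrite hn expfzDr // -exprnP in e.
have nb := odd_intr_neq0 hb; have nb' := odd_intr_neq0 hb'.
have h2k : (2%:R : rat) ^ k != 0 by apply: expfz_neq0.
have /intr_inj e1 : (a * b')%:~R = (2 ^+ n * a' * b)%:~R :> rat.
  apply: (mulfI h2k); rewrite !intrM rmorphXn /=.
  have -> : (2%:R : rat) ^ k * (a%:~R * b'%:~R) =
    (2%:R ^ k * a%:~R / b%:~R) * b%:~R * b'%:~R by field.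
  have -> : (2%:R : rat) ^ k * ((2%:~R) ^+ n * a'%:~R * b%:~R) =
    (2%:R ^ k * 2%:R ^+ n * a'%:~R / b'%:~R) * b%:~R * b'%:~R by field.
  by rewrite e.
have := congr1 (fun z => odd `|z|%N) e1; rewrite /= !abszM !oddM ha hb' abszX /=.
by case: n {e e1} hn => [|n] hn; [rewrite hn addr0 | rewrite expnS oddM].
Qed.

Lemma nu_dyadic (r : rat) (k a b : int) : odd `|a|%N -> odd `|b|%N ->
  r = 2%:R ^ k * a%:~R / b%:~R -> nu r = k.
Proof.
move=> ha hb hr; rewrite /nu.
match goal with |- epsilon ?i ?P = _ => have : exists r, P r end.
  by exists k; right; exists a, b.
move=> /epsilon_spec H; have [[r0 _]|[a' [b' [ha' [hb' e]]]]] := H (inhabits 0).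
  exfalso; move: hr; rewrite r0 => /esym /eqP; rewrite !mulf_eq0 invr_eq0.
  by rewrite (negbTE (expfz_neq0 _ _)) // (negbTE (odd_intr_neq0 ha)) (negbTE (odd_intr_neq0 hb)).
by apply: (dyadic_exponent_unique ha' hb' ha hb); rewrite -e.
Qed.

Definition dyadic_sum (x : C) (N : nat) : rat :=
  \sum_(i < N) (nat_of_bool (x i))%:R / 2%:R ^+ i.+1.

Lemma dyadic_sum_stable x N N' : (forall n, (N <= n)%N -> x n = false) ->
  (N <= N')%N -> dyadic_sum x N' = dyadic_sum x N.
Proof.
move=> h hl; rewrite /dyadic_sum -(subnKC hl) big_split_ord /=.
by rewrite [X in _ + X]big1 ?addr0 // => i _; rewrite h ?mul0r // leq_addr.
Qed.

Lemma dyval_sum x N : (forall n, (N <= n)%N -> x n = false) -> dyval x = dyadic_sum x N.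
Proof.
move=> hN; rewrite /dyval.
match goal with |- epsilon ?i ?P = _ => have : exists r, P r end.
  by exists (dyadic_sum x N), N.
move=> /epsilon_spec H; have [N' [hN' ->]] := H (inhabits 0).
case: (leqP N N') => hl; first exact: dyadic_sum_stable.
by symmetry; apply: dyadic_sum_stable => //; apply: ltnW.
Qed.

Lemma dyadic_sum_last_one x L : x L = true ->
  exists2 P : nat, odd P & dyadic_sum x L.+1 = P%:R / 2%:R ^+ L.+1.
Proof.
move=> hL; exists (\sum_(i < L.+1) nat_of_bool (x i) * 2 ^ (L - i))%N.
  rewrite big_ord_recr /= hL subnn expn0 muln1 oddD.
  suff -> : odd (\sum_(i < L) x i * 2 ^ (L - i)) = false by [].
  apply/negbTE; rewrite -dvdn2; apply: dvdn_sum => i _.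
  by rewrite dvdn_mull // -(prednK (_ : 0 < L - i)%N) ?subn_gt0 // expnS dvdn_mulr.
rewrite /dyadic_sum natr_sum mulr_suml; apply: eq_bigr => i _.
rewrite natrM natrX.
have -> : (2%:R : rat) ^+ L.+1 = 2%:R ^+ (L - i) * 2%:R ^+ i.+1.
  by rewrite -exprD addnS subnK // -ltnS.
by rewrite invfM mulrA -(mulrA _ (2%:R ^+ (L - i))) mulfV ?mulr1 // expf_neq0.
Qed.

Lemma nu_dyval_last_one x L : x L = true -> (forall i, (L < i)%N -> x i = false) ->
  nu (dyval x) = - (L.+1)%:Z.
Proof.
move=> hL hgt; rewrite (dyval_sum (N := L.+1)) //.
have [P hP ->] := dyadic_sum_last_one hL.
apply: (nu_dyadic (a := P%:Z) (b := 1)) => //.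
by rewrite -exprnN exprnP rmorph1 divr1 mulrC.
Qed.

Lemma exists_last_one y : inQ2 y -> y <> zeroC ->
  exists L, y L = true /\ forall i, (L < i)%N -> y i = false.
Proof.
move=> [N hN] hy; elim: N hN => [|N IH] hN.
  by case: hy; apply: functional_extensionality => n; rewrite hN.
case e: (y N); first by exists N; split => // i hi; apply: hN.
by apply: IH => n; rewrite leq_eqVlt => /orP[/eqP <- // | ]; exact: hN.
Qed.

Lemma nu_dyval_catC m y : inQ2 y -> y <> zeroC ->
  nu (dyval (catC m y)) = nu (dyval y) - (size m)%:Z.
Proof.
move=> hy hy0; have [L [hL hgt]] := exists_last_one hy hy0.
rewrite (nu_dyval_last_one hL hgt) (@nu_dyval_last_one _ (size m + L)).
- lia.
- by rewrite /catC ltnNge leq_addr addKn.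
move=> i hi; rewrite /catC ifF; first by apply: hgt; rewrite ltn_subRL.
by apply/negbTE; rewrite -leqNgt (leq_trans (leq_addr L _)) // ltnW.
Qed.

Lemma List_In_nth (T : Type) (d : T) (s : seq T) k : (k < size s)%N -> List.In (nth d s k) s.
Proof. by elim: s k => [|a s IH] [|k] //= hk; [left | right; exact: IH]. Qed.

Lemma nu_dyval_inV v : inV v -> exists E : seq C, forall x, inQ2 x -> ~ List.In x E ->
  nu (dyval (v x)) - nu (dyval x) = logslope v x.
Proof.
move=> [_ [ms [ms' [hs [hp [hp' he]]]]]].
exists (List.map (fun m => catC m zeroC) ms) => x hx hnin.
have [k hk e] := partition_cover x hp; set y := cdrop _ x in e.
have hy0 : y <> zeroC.
  by move=> y0; apply: hnin; rewrite e y0; apply: List.in_map; apply: List_In_nth.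
have hw : affine_at v x (nth [::] ms k) (nth [::] ms' k).
  by split=> [|z]; [rewrite e; apply: prefixC_catC | apply: he].
have hy : inQ2 y := inQ2_cdrop _ hx.
rewrite (logslope_affine_at hw) e he // !nu_dyval_catC // /lendiff; lia.
Qed.

(** * The cocycle [mu] *)

Lemma mu_witness x : inQ2 x ->
  let v := epsilon (inhabits id) (fun v : C -> C => inV v /\ v zeroC = x) in
  inV v /\ v zeroC = x.
Proof.
by move=> hx; apply: (epsilon_spec (inhabits id) (fun v : C -> C => inV v /\ _)); exact: inV_zero_to.
Qed.

Lemma mu_hid x : mu hid x = 0.
Proof. by rewrite /mu /=; set a := logslope _ _; set c := nu _; lia. Qed.

Definition almost_V_invariant (e : C -> int) : Prop :=
  forall w, inV w -> exists l : seq C, forall x, inQ2 x -> e x <> e (w x) -> List.In x l.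

Section Mu.
Variable p : homeo.
Hypothesis hp : inStabN p.

Local Notation ph := (hfun p).
Local Notation phi := (hinv p).

Lemma conj_logslope_subr_logslope v v' : inV v -> conj_affine p v' -> v zeroC = v' zeroC ->
  conj_logslope p v - logslope v zeroC = conj_logslope p v' - logslope v' zeroC.
Proof.
move=> hv gv' e; have [vi [k1 k2 hvi]] := inV_inv hv.
set u := vi \o v'; have gu : conj_affine p u := conj_affine_comp (conj_affine_inV hp hvi) gv'.
have u0 : u zeroC = zeroC by rewrite /u /= -e k1.
have -> : v' = v \o u by apply: functional_extensionality => y; rewrite /u /= k2.
have gv := conj_affine_inV hp hv; have [cv _] := gv; have [cu _] := gu.
rewrite (conj_logslope_comp gv gu u0) logslope_comp ?u0 //.
by rewrite (conj_logslope_fixed0 hp gu u0) opprD addrACA subrr addr0.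
Qed.

Lemma muE x v : inQ2 x -> conj_affine p v -> v zeroC = x ->
  mu p x = conj_logslope p v - logslope v zeroC - nu (dyval (phi x)) + nu (dyval x).
Proof.
move=> hx gv e; rewrite /mu; have [hv hv0] := mu_witness hx.
by have := conj_logslope_subr_logslope hv gv (etrans hv0 (esym e)); rewrite /conj_logslope => ->.
Qed.

(** [mu (w x) - mu x] combines the log-slopes of [w] at [x] and of [phi^-1 w phi] at
    [phi^-1 x] with the corresponding valuation shifts, and these agree off a finite set. *)
Lemma mu_almost_V_invariant : almost_V_invariant (mu p).
Proof.
move=> w hw; have hW := inV_conj_inv hp hw.
have [E1 hE1] := nu_dyval_inV hw; have [E2 hE2] := nu_dyval_inV hW.
exists (E1 ++ List.map ph E2) => x hx hne; apply: List.in_or_app.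
case: (classic (List.In x E1)) => h1; [by left | right].
case: (classic (List.In (phi x) E2)) => h2; first by rewrite -[x](hinvK p); apply: List.in_map.
exfalso; apply: hne; have [hv hv0] := mu_witness hx; set v := epsilon _ _ in hv hv0.
have gv := conj_affine_inV hp hv.
have gwv : conj_affine p (w \o v) := conj_affine_comp (conj_affine_inV hp hw) gv.
have hwx : inQ2 (w x) := inV_inQ2 hw hx.
rewrite (muE hx gv hv0) (muE hwx gwv (congr1 w hv0)).
have e1 := hE1 x hx h1; have e2 := hE2 (phi x) (inQ2_stab_inv hp hx) h2.
rewrite /= hinvK in e2.
have c1 := inV_piecewise_affine (inV_conj_inv hp hv) (phi zeroC).
have c2 := inV_piecewise_affine hW ((phi \o v \o ph) (phi zeroC)).
have c3 := inV_piecewise_affine hv zeroC.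
have c4 := inV_piecewise_affine hw (v zeroC).
rewrite /conj_logslope conj_comp (logslope_comp c1 c2) (logslope_comp c3 c4).
rewrite /= hinvK hv0 -e1 -e2; lia.
Qed.

End Mu.

Lemma mu_hcomp p1 p2 : inStabN p1 -> inStabN p2 ->
  exists c0 : int, forall x, inQ2 x -> mu (hcomp p1 p2) x = mu p2 (hinv p1 x) + mu p1 x + c0.
Proof.
move=> hp1 hp2; set r := hinv p1 zeroC.
have [u [hu u0]] := inV_zero_to (inQ2_stab_inv hp1 inQ2_zero).
exists (logslope u zeroC - conj_logslope p2 u) => x hx.
have [hv hv0] := mu_witness hx; set v := epsilon _ _ in hv hv0.
set W := hinv p1 \o v \o hfun p1; have hW : inV W := inV_conj_inv hp1 hv.
have gWu : conj_affine p2 (W \o u).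
  exact: conj_affine_comp (conj_affine_inV hp2 hW) (conj_affine_inV hp2 hu).
have eWu : (W \o u) zeroC = hinv p1 x by rewrite /= u0 /W /= hinvK hv0.
rewrite (muE hp2 (inQ2_stab_inv hp1 hx) gWu eWu) /mu /= -/v.
rewrite -[X in logslope X _ - logslope v zeroC]/(hinv p2 \o W \o hfun p2).
have c1 := inV_piecewise_affine (inV_conj_inv hp2 hu) (hinv p2 zeroC).
have c2 := inV_piecewise_affine (inV_conj_inv hp2 hW) ((hinv p2 \o u \o hfun p2) (hinv p2 zeroC)).
have c3 := inV_piecewise_affine hu zeroC.
have c4 := inV_piecewise_affine hW (u zeroC).
rewrite /conj_logslope conj_comp (logslope_comp c1 c2) (logslope_comp c3 c4).
rewrite /= hinvK u0 -/(conj_logslope p2 u) -/r -/W; lia.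
Qed.

Local Open Scope group_scope.

Section GroupFacts.
Variable G : groupType.
Implicit Types g h z : G.

Lemma gpowz1n n : gpowz (1 : G) n = 1.
Proof. by case: n => k /=; rewrite expg1n ?invg1. Qed.

Lemma gpowzS g n : gpowz g (n + 1)%R = gpowz g n * g.
Proof.
case: n => [k|[|k]].
- have -> : (Posz k + 1)%R = Posz k.+1 by rewrite -addn1.
  by rewrite /= expgSr.
- by rewrite /= mulVg.
rewrite (_ : (Negz k.+1 + 1)%R = Negz k); last by rewrite !NegzE; lia.
rewrite /= [g ^+ k.+2]expgSr invgM -mulgA.
by rewrite -(commuteV (commuteX _ (commute_refl g))) mulKg.
Qed.

Lemma gpowzD g m n : gpowz g (m + n)%R = gpowz g m * gpowz g n.
Proof.
have gpowzB1 k : gpowz g (k - 1)%R = gpowz g k * g^-1.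
  by rewrite -[in RHS](GRing.subrK 1%R k) gpowzS mulgK.
case: n => k; elim: k => [|k IH].
- by rewrite GRing.addr0 mulg1.
- by rewrite -addn1 PoszD GRing.addrA !gpowzS IH mulgA.
- have -> : Negz 0 = (0 - 1)%R by [].
  by rewrite GRing.addrA GRing.addr0 !gpowzB1 mul1g.
rewrite (_ : Negz k.+1 = (Negz k - 1)%R); last by rewrite !NegzE; lia.
by rewrite GRing.addrA !gpowzB1 IH mulgA.
Qed.

Lemma gpowzN g n : gpowz g (- n)%R = (gpowz g n)^-1.
Proof. by apply: (mulgI (gpowz g n)); rewrite mulgV -gpowzD GRing.subrr. Qed.

Lemma gpowzV g n : (gpowz g n)^-1 = gpowz g^-1 n.
Proof. by case: n => k /=; rewrite expVgn // invgK. Qed.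

Lemma centralV z : central z -> central z^-1.
Proof. by move=> hz g; apply/commute_sym/commuteV/commute_sym/hz. Qed.

Lemma central_gpowz z n : central z -> central (gpowz z n).
Proof.
move=> hz g; apply: commute_sym.
by case: n => k /=; [|apply: commuteV]; apply/commuteX/commute_sym/hz.
Qed.

Lemma gpowzMl z1 z2 n : central z1 -> gpowz (z1 * z2) n = gpowz z1 n * gpowz z2 n.
Proof.
move=> h1; case: n => k /=; rewrite expgMn ?invgM //.
by rewrite (central_gpowz (Negz k) h1).
Qed.

Section Automorphism.
Variable b : G -> G.
Hypothesis hb : is_aut b.

Lemma aut1 : b 1 = 1.
Proof. by apply: (mulgI (b 1)); rewrite -hb.1 !mulg1. Qed.

Lemma autV g : b g^-1 = (b g)^-1.
Proof. by apply: (mulgI (b g)); rewrite -hb.1 !mulgV aut1. Qed.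

Lemma aut_inj : injective b.
Proof. by have [bi k1 _] := hb.2; apply: can_inj k1. Qed.

Lemma aut_gpowz g n : b (gpowz g n) = gpowz (b g) n.
Proof.
have bX k : b (g ^+ k) = b g ^+ k by elim: k => [|k IH]; rewrite ?aut1 // !expgS hb.1 IH.
by case: n => k /=; rewrite ?autV bX.
Qed.

Lemma aut_central z : central z -> central (b z).
Proof. by move=> hz g; have [bi _ k2] := hb.2; rewrite -(k2 g) -!hb.1 hz. Qed.

Definition aut_inv : G -> G := fun g => epsilon (inhabits 1) (fun h => b h = g).

Lemma aut_invK : cancel aut_inv b.
Proof.
move=> g; apply: (epsilon_spec (inhabits 1) (fun h => b h = g)).
by have [bi _ k2] := hb.2; exists (bi g).
Qed.

Lemma autK : cancel b aut_inv.
Proof. by move=> g; apply: aut_inj; rewrite aut_invK. Qed.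

Lemma is_aut_inv : is_aut aut_inv.
Proof.
split; last by exists b; [exact: aut_invK | exact: autK].
by move=> x y; apply: aut_inj; rewrite hb.1 !aut_invK.
Qed.

Lemma central_aut_inv z : central z -> central (aut_inv z).
Proof. by move=> hz g; apply: aut_inj; rewrite !hb.1 aut_invK hz. Qed.

End Automorphism.

Lemma mulg_centralC z a k c : central z -> (a * z) * k * (c * z)^-1 = a * k * c^-1.
Proof. by move=> hz; rewrite invgM !mulgA -(mulgA a z k) hz mulgA mulgK. Qed.

End GroupFacts.

(** * Transport of [N_Kbar(G)] *)

Section Normalizer.
Variable G : groupType.

Definition normalizes_K (f : C -> G) : Prop :=
  forall (k : C -> G) (v w : C -> C), inK k -> inV v -> cancel v w -> cancel w v ->
    inK (fun x => f x * k x * (f (w x))^-1).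

Lemma inNK_normalizes_K f : inNK f <-> normalizes_K f /\ normalizes_K (fun x => (f x)^-1).
Proof.
have invK (k : C -> G) (w : C -> C) :
    (fun x => (f x)^-1 * k x * ((f (w x))^-1)^-1) = (fun x => (f x)^-1 * k x * f (w x)).
  by apply: functional_extensionality => x; rewrite invgK.
split=> -[h1 h2]; split=> // k v w hk hv k1 k2.
- by rewrite (invK k w); exact: h2 k v w hk hv k1 k2.
- by move: (h2 k v w hk hv k1 k2); rewrite (invK k w).
Qed.

Lemma normalizes_K_transport (f : C -> G) (ps ps' : C -> C) (be : G -> G) (Z : G)
    (e : C -> int) :
  cancel ps ps' -> cancel ps' ps ->
  (forall x, inQ2 x -> inQ2 (ps x)) -> (forall x, inQ2 x -> inQ2 (ps' x)) ->
  (forall v, inV v -> inV (ps \o v \o ps')) -> is_aut be -> central Z ->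
  almost_V_invariant e ->
  normalizes_K f -> normalizes_K (fun x => be (f (ps x)) * gpowz Z (e x)).
Proof.
move=> c1 c2 q1 q2 hV hb hZ hAI hf k v w [l hl] hv k1 k2.
have bK : cancel (aut_inv be) be := aut_invK hb.
have hk' : inK (fun y => aut_inv be (k (ps' y))).
  exists (List.map ps l) => y hy hne; rewrite -[y]c2; apply: List.in_map.
  by apply: hl; [exact: q2 | move=> e1; apply: hne; rewrite e1 (aut1 (is_aut_inv hb))].
have k1' : cancel (ps \o v \o ps') (ps \o w \o ps') by move=> y /=; rewrite c1 k1 c2.
have k2' : cancel (ps \o w \o ps') (ps \o v \o ps') by move=> y /=; rewrite c1 k2 c2.
have [l1 hl1] := hf _ _ _ hk' (hV v hv) k1' k2'.
have [l2 hl2] := hAI w (inV_can hv k1 k2).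
exists (List.map ps' l1 ++ l2) => x hx hne; apply: List.in_or_app.
case: (classic (e x = e (w x))) => he; last by right; apply: hl2.
left; rewrite -[x]c1; apply: List.in_map; apply: hl1 => [|h1]; first exact: q1.
apply: hne; rewrite he mulg_centralC; last exact: central_gpowz.
by move: h1 => /(congr1 be); rewrite (aut1 hb) !hb.1 (autV hb) bK /= !c1.
Qed.

Lemma inNK_transport (f : C -> G) (ps ps' : C -> C) (be : G -> G) (Z : G) (e : C -> int) :
  cancel ps ps' -> cancel ps' ps ->
  (forall x, inQ2 x -> inQ2 (ps x)) -> (forall x, inQ2 x -> inQ2 (ps' x)) ->
  (forall v, inV v -> inV (ps \o v \o ps')) -> is_aut be -> central Z ->
  almost_V_invariant e ->
  inNK f -> inNK (fun x => be (f (ps x)) * gpowz Z (e x)).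
Proof.
move=> c1 c2 q1 q2 hV hb hZ hAI /inNK_normalizes_K [h1 h2].
apply/inNK_normalizes_K; split; first exact: normalizes_K_transport h1.
have := normalizes_K_transport c1 c2 q1 q2 hV hb (centralV hZ) hAI h2.
congr normalizes_K; apply: functional_extensionality => x.
by rewrite invgM (autV hb) gpowzV (central_gpowz _ (centralV hZ)).
Qed.

End Normalizer.

(** * The automorphisms [sigma_0(phi, beta)] *)

Section Sigma0.
Variables (G : groupType) (p : homeo) (b : G -> G).
Hypotheses (hp : inStabN p) (hb : is_aut b).

Local Notation F := (sigma0 p b).
Local Notation ph := (hfun p).
Local Notation phi := (hinv p).

Lemma inZK_sigma0 a : inZK a -> inZK (F a).
Proof. exact: aut_central. Qed.

Lemma sigma0_qeq a a' : inZK a -> qeq a a' -> qeq (F a) (F a').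
Proof.
case: a a' => z f [z' f'] /= hz [/= <- [c [hc he]]]; split => //=.
exists (b c); split=> [|x hx /=]; first exact: aut_central.
rewrite he; last exact: inQ2_stab_inv.
rewrite hb.1 -!mulgA; congr (_ * _).
exact: (aut_central hb hc).
Qed.

Lemma sigma0_qmul a a' : inZK a -> inZK a' -> qeq (F (qmul a a')) (qmul (F a) (F a')).
Proof.
case: a a' => z f [z' f'] /= hz hz'; split; first by rewrite /= hb.1.
exists 1; split=> [g|x hx /=]; first by rewrite mul1g mulg1.
rewrite mulg1 !hb.1 gpowzMl; last exact: aut_central.
rewrite -!mulgA; congr (_ * _); rewrite !mulgA; congr (_ * _).
exact: (central_gpowz _ (aut_central hb hz)).
Qed.

Lemma sigma0_qeq_inj a a' : inZK a -> inZK a' -> qeq (F a) (F a') -> qeq a a'.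
Proof.
case: a a' => z f [z' f'] /= hz hz' [/= /(aut_inj hb) ez [c [hc he]]].
split => //=; subst z'; exists (aut_inv b c); split.
  by apply: (central_aut_inv hb).
move=> y hy; apply: (aut_inj hb); rewrite hb.1 aut_invK //.
have := he (ph y) (inQ2_stab hp hy); rewrite /= hfunK => e2.
apply: (mulIg (gpowz (b z) (mu p (ph y)))); rewrite e2 -!mulgA; congr (_ * _).
exact: (central_gpowz _ (aut_central hb hz)).
Qed.

Definition sigma0_preimage (a : QE G) : QE G :=
  (aut_inv b a.1,
   fun y => aut_inv b (a.2 (ph y)) * gpowz (aut_inv b a.1) (- mu p (ph y))%R).

Lemma inZK_sigma0_preimage a : inZK a -> inZK (sigma0_preimage a).
Proof. exact: central_aut_inv. Qed.

Lemma sigma0_preimageK a : qeq (F (sigma0_preimage a)) a.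
Proof.
split; first by rewrite /= aut_invK.
exists 1; split=> [g|x hx /=]; first by rewrite mul1g mulg1.
by rewrite mulg1 hinvK hb.1 aut_invK // (aut_gpowz hb) aut_invK // gpowzN mulgVK.
Qed.

Lemma almost_V_invariant_mu_conj : almost_V_invariant (fun y => (- mu p (ph y))%R).
Proof.
move=> w hw; have [l hl] := mu_almost_V_invariant hp (inV_conj hp hw).
exists (List.map phi l) => y hy hne; rewrite -[y](hfunK p); apply: List.in_map.
by apply: hl => [|e]; [exact: inQ2_stab | apply: hne; rewrite e /= hfunK].
Qed.

Lemma inZN_sigma0 a : inZN a -> inZN (F a).
Proof.
case: a => z f [/= hz hf]; split; first exact: aut_central.
exact: (inNK_transport (hinvK p) (hfunK p) (inQ2_stab_inv hp) (inQ2_stab hp)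
  (inV_conj_inv hp) hb (aut_central hb hz) (mu_almost_V_invariant hp) hf).
Qed.

Lemma inZN_sigma0_preimage a : inZN a -> inZN (sigma0_preimage a).
Proof.
case: a => z f [/= hz hf]; split; first exact: central_aut_inv.
exact: (inNK_transport (hfunK p) (hinvK p) (inQ2_stab hp) (inQ2_stab_inv hp)
  (inV_conj hp) (is_aut_inv hb) (central_aut_inv hb hz) almost_V_invariant_mu_conj hf).
Qed.

Lemma is_quot_aut_sigma0_ZK : is_quot_aut (@inZK G) F.
Proof.
split; first exact: inZK_sigma0.
split; first by move=> a a' ha _; apply: sigma0_qeq.
split; first exact: sigma0_qmul.
split; first exact: sigma0_qeq_inj.
by move=> a ha; exists (sigma0_preimage a); split;
  [exact: inZK_sigma0_preimage | exact: sigma0_preimageK].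
Qed.

Lemma is_quot_aut_sigma0_ZN : is_quot_aut (@inZN G) F.
Proof.
split; first exact: inZN_sigma0.
split; first by move=> a a' [ha _] _; apply: sigma0_qeq.
split; first by move=> a a' [ha _] [ha' _]; apply: sigma0_qmul.
split; first by move=> a a' [ha _] [ha' _]; apply: sigma0_qeq_inj.
by move=> a ha; exists (sigma0_preimage a); split;
  [exact: inZN_sigma0_preimage | exact: sigma0_preimageK].
Qed.

End Sigma0.

Lemma sigma0_hid (G : groupType) (a : QE G) : qeq (sigma0 hid id a) a.
Proof.
split => //; exists 1; split=> [g|x hx /=]; first by rewrite mul1g mulg1.
by rewrite mu_hid !mulg1.
Qed.

Lemma sigma0_hcomp (G : groupType) (p1 p2 : homeo) (b1 b2 : G -> G) (a : QE G) :
  inStabN p1 -> is_aut b1 -> inStabN p2 -> is_aut b2 -> inZK a ->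
  qeq (sigma0 (hcomp p1 p2) (b1 \o b2) a) (sigma0 p1 b1 (sigma0 p2 b2 a)).
Proof.
case: a => z f hp1 hb1 hp2 hb2 hz; split => //=.
have [c0 hc0] := mu_hcomp hp1 hp2.
set Z := b1 (b2 z); have hZ : central Z by do 2!apply: aut_central => //.
exists (gpowz Z c0)^-1; split=> [|x hx /=]; first exact/centralV/central_gpowz.
rewrite hc0 // (gpowzD Z _ c0) (gpowzD Z (mu p2 _)).
by rewrite hb1.1 (aut_gpowz hb1) -/Z !mulgA mulgK.
Qed.

Definition point_mass (G : groupType) (x0 : C) (g : G) : C -> G :=
  fun x => if excluded_middle_informative (x = x0) then g else 1.

Lemma point_mass_neq (G : groupType) x0 (g : G) x : x <> x0 -> point_mass x0 g x = 1.
Proof. by rewrite /point_mass; case: excluded_middle_informative. Qed.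

Lemma point_mass_eq (G : groupType) x0 (g : G) : point_mass x0 g x0 = g.
Proof. by rewrite /point_mass; case: excluded_middle_informative. Qed.

Lemma inNK_point_mass (G : groupType) x0 (g : G) : inNK (point_mass x0 g).
Proof.
split=> k v w [l hl] hv k1 k2; exists [:: x0, v x0 & l] => x hx hne.
all: case: (classic (x = x0)) => [->|h1]; first by left.
all: case: (classic (w x = x0)) => [<-|h2]; first by right; left; rewrite k2.
all: right; right; apply: hl => // hk; apply: hne.
all: by rewrite !point_mass_neq // hk ?mul1g ?invg1 ?mulg1.
Qed.

Lemma exists_inQ2_neq2 (A B : C) : exists y, [/\ inQ2 y, y <> A & y <> B].
Proof.
exists (catC [:: ~~ A 0; ~~ B 1%N] zeroC); split; first exact/inQ2_catC/inQ2_zero.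
- by move/(congr1 (fun x => x 0)); rewrite /catC /=; case: (A 0).
- by move/(congr1 (fun x => x 1%N)); rewrite /catC /=; case: (B 1%N).
Qed.

Lemma continuousC_eq_on_Q2 (h h' : C -> C) : continuousC h -> continuousC h' ->
  (forall x, inQ2 x -> h x = h' x) -> h =1 h'.
Proof.
move=> ch ch' he x; apply: functional_extensionality => i.
have [M1 hM1] := ch x i.+1; have [M2 hM2] := ch' x i.+1.
set x0 := catC (ctake (M1 + M2) x) zeroC.
have ag j : (j < M1 + M2)%N -> x0 j = x j by move=> hj; rewrite /x0 /catC size_ctake hj nth_mkseq.
rewrite -(hM1 x0 _ i) // => [|j hj]; last by rewrite ag // ltn_addr.
rewrite -(hM2 x0 _ i) // => [|j hj]; last by rewrite ag // ltn_addl.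
by rewrite he //; apply/inQ2_catC/inQ2_zero.
Qed.

Section Injectivity.
Variables (G : groupType) (p p' : homeo) (b b' : G -> G).
Hypotheses (hp : inStabN p) (hb : is_aut b) (hp' : inStabN p') (hb' : is_aut b').
Hypothesis hsigma : forall a : QE G, inZN a -> qeq (sigma0 p b a) (sigma0 p' b' a).

(** The two images of the point mass [g] at [x0] differ by a central constant, which
    is [1] because both are trivial at some common point of [Q_2]. *)
Lemma sigma0_eq_point_mass x0 (g : G) : inQ2 x0 -> g <> 1 ->
  hfun p x0 = hfun p' x0 /\ b g = b' g.
Proof.
move=> hx0 hg; have hza : inZN ((1 : G), point_mass x0 g).
  by split; [move=> h; rewrite mul1g mulg1 | exact: inNK_point_mass].
have [_ [c [hc /= he]]] := hsigma hza.
have {}he x : inQ2 x ->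
    b' (point_mass x0 g (hinv p' x)) = b (point_mass x0 g (hinv p x)) * c.
  by move=> hx; have := he x hx; rewrite (aut1 hb) (aut1 hb') !gpowz1n !mulg1.
have [y [hy hy1 hy2]] := exists_inQ2_neq2 (hfun p x0) (hfun p' x0).
have c1 : c = 1.
  have := he y hy; rewrite !point_mass_neq ?(aut1 hb) ?(aut1 hb') ?mul1g //.
  - by move=> e; apply: hy1; rewrite -e hinvK.
  - by move=> e; apply: hy2; rewrite -e hinvK.
have := he (hfun p x0) (inQ2_stab hp hx0); rewrite hfunK point_mass_eq c1 mulg1.
case: (classic (hinv p' (hfun p x0) = x0)) => e.
  by rewrite e point_mass_eq => <-; split => //; rewrite -[in RHS]e hinvK.
rewrite point_mass_neq // (aut1 hb') => /esym e1.
by case: hg; apply: (aut_inj hb); rewrite e1 (aut1 hb).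
Qed.

Lemma sigma0_injective : (exists g : G, g <> 1) -> hfun p =1 hfun p' /\ b =1 b'.
Proof.
move=> [g0 hg0]; split.
  apply: continuousC_eq_on_Q2; try exact: hfun_cont.
  by move=> x hx; have [] := sigma0_eq_point_mass hx hg0.
move=> h; case: (classic (h = 1)) => [->|hh]; first by rewrite (aut1 hb) (aut1 hb').
by have [_ ->] := sigma0_eq_point_mass inQ2_zero hh.
Qed.

End Injectivity.

Theorem mainTheorem15 (G : groupType) (nontriv : exists g : G, g <> 1) :
  (* each sigma_0(phi,beta) is a well-defined automorphism of Z(G) x Kbar/Z(G) *)
  (forall (p : homeo) (b : G -> G), inStabN p -> is_aut b ->
     is_quot_aut (@inZK G) (sigma0 p b)) /\
  (* action: identity acts trivially *)
  (forall a : QE G, inZK a -> qeq (sigma0 hid id a) a) /\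
  (* action: compatibility with the product in Stab_N(Q_2) x Aut(G) *)
  (forall (p1 p2 : homeo) (b1 b2 : G -> G) (a : QE G),
     inStabN p1 -> is_aut b1 -> inStabN p2 -> is_aut b2 -> inZK a ->
     qeq (sigma0 (hcomp p1 p2) (b1 \o b2) a) (sigma0 p1 b1 (sigma0 p2 b2 a))) /\
  (* the action preserves Z(G) x N_Kbar(G)/Z(G), inducing automorphisms of it *)
  (forall (p : homeo) (b : G -> G), inStabN p -> is_aut b ->
     is_quot_aut (@inZN G) (sigma0 p b)) /\
  (* the induced morphism sigma is injective *)
  (forall (p p' : homeo) (b b' : G -> G),
     inStabN p -> is_aut b -> inStabN p' -> is_aut b' ->
     (forall a : QE G, inZN a -> qeq (sigma0 p b a) (sigma0 p' b' a)) ->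
     hfun p =1 hfun p' /\ b =1 b').
Proof.
split; first exact: is_quot_aut_sigma0_ZK.
split; first by move=> a _; exact: sigma0_hid.
split; first exact: sigma0_hcomp.
split; first exact: is_quot_aut_sigma0_ZN.
by move=> p p' b b' hp hb hp' hb' hsigma; exact: sigma0_injective.
Qed.
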